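(* In any execution of temporal BFS on a temporal graph $G=(V,E)$ from source $s$ with starting time $t_s$, at every moment the queue $Q$ contains at most two records whose vertex is any given $v\in V$.
   Context: A temporal graph is a pair $G=(V,E)$ where $V$ is a finite set of vertices and $E$ is a finite set of temporal edges, i.e. triples $(u,v,t)$ with $u,v\in V$, $u\neq v$, $t\in\mathbb{R}$ (the time at which the edge is active); distinct elements of $E$ are distinct triples. Fix $t_s\in\mathbb{R}$ and $s\in V$. Temporal BFS. Records are tuples $(x,d,\tau,p)$ (vertex $x$, level $d$, time $\tau$, predecessor record $p$ or none); every record ever created is an occurrence (node) of the BFS tree $T$, rooted at the initial record, with a tree edge from the predecessor record to the record; the level and time of an occurrence are the final values of its fields. For each $x\in V$ a current value $\sigma(x)$ is kept, initially $\infty$, and set to $\tau$ whenever a record of $x$ is created or its time is updated to $\tau$. Initially the FIFO queue $Q$ contains only $(s,0,t_s,\text{none})$ and $\sigma(s)=t_s$; no edge is traversed. While $Q\neq\emptyset$: pop the front record $R=(u,d_u,\sigma_u,p_u)$; let $B$ be the set of edges $(u,v,t)\in E$ not yet traversed with $\sigma_u\le t$; for each vertex $v$ such that $B$ contains an edge to $v$ (in any order), let $e=(u,v,t)$ be the edge of $B$ to $v$ with smallest $t$, mark $e$ traversed, and: (i) if $Q$ contains no record of $v$ and $\sigma(v)>t$, create $(v,d_u+1,t,R)$ and append it to $Q$; (ii) if $Q$ contains a record of $v$ with level $d_u+1$ and $\sigma(v)>t$, set that record's time to $t$ and predecessor to $R$; (iii) if $Q$ contains a record of $v$ but none with level $d_u+1$,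 and $\sigma(v)>t$, create $(v,d_u+1,t,R)$ and append it to $Q$. *)

From Stdlib Require Import Reals List.
Import ListNotations.
Open Scope R_scope.

Set Implicit Arguments.

Definition tedge (V : Type) := (V * V * R)%type.

Section TemporalBFS.
Context {V : Type}.

(* A BFS record (x, d, tau, p); each record carries a unique identifier
   [rid], and the predecessor field stores the identifier of the
   predecessor record (None = "none"). *)
Record rec := mkRec {
  rid   : nat;
  rv    : V;
  rlev  : nat;
  rtime : R;
  rpred : option nat }.

(* sigma(x) \in R \cup {infinity}; None encodes infinity. *)
Definition gt_opt (o : option R) (t : R) : Prop :=
  match o with None => True | Some x => t < x end.

Definition sig_upd (sig : V -> option R) (v : V) (t : R) (sig' : V -> option R) :=
  sig' v = Some t /\ forall x, x <> v -> sig' x = sig x.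

(* Algorithm state:
   sQ     : the FIFO queue (front = head of the list)
   ssig   : the current values sigma
   strav  : the edges traversed so far
   snext  : fresh identifier for the next created record
   scur   : None between iterations of the while loop; otherwise
            Some (R, B, vs) when the popped record R is being processed,
            B is the edge set computed at the pop, and vs is the list
            of vertices still to be handled by the inner "for each" loop. *)
Record state := mkState {
  sQ    : list rec;
  ssig  : V -> option R;
  strav : list (tedge V);
  snext : nat;
  scur  : option (rec * (tedge V -> Prop) * list V) }.

Definition init_state (s : V) (ts : R) (st : state) : Prop :=
  sQ st = [mkRec 0 s 0 ts None] /\
  ssig st s = Some ts /\ (forall x, x <> s -> ssig st x = None) /\
  strav st = [] /\ snext st = 1%nat /\ scur st = None.

(* One atomic action of the algorithm (nondeterministic: the order in
   which the vertices of B are handled is arbitrary). *)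
Inductive step (E : list (tedge V)) : state -> state -> Prop :=
| step_pop : forall R0 Q sig trav nx (vs : list V),
    let B := fun e : tedge V =>
      In e E /\ ~ In e trav /\ fst (fst e) = rv R0 /\ rtime R0 <= snd e in
    NoDup vs ->
    (forall v, In v vs <-> exists t, B (rv R0, v, t)) ->
    step E (mkState (R0 :: Q) sig trav nx None)
           (mkState Q sig trav nx (Some (R0, B, vs)))
| step_done : forall R0 B Q sig trav nx,
    step E (mkState Q sig trav nx (Some (R0, B, [])))
           (mkState Q sig trav nx None)
| step_create_new : forall R0 (B : tedge V -> Prop) v vs t Q sig sig' trav nx,
    B (rv R0, v, t) -> (forall t', B (rv R0, v, t') -> t <= t') ->
    (forall r, In r Q -> rv r <> v) -> gt_opt (sig v) t ->
    sig_upd sig v t sig' ->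
    step E (mkState Q sig trav nx (Some (R0, B, v :: vs)))
           (mkState (Q ++ [mkRec nx v (S (rlev R0)) t (Some (rid R0))]) sig'
                    ((rv R0, v, t) :: trav) (S nx) (Some (R0, B, vs)))
| step_update : forall R0 (B : tedge V -> Prop) v vs t Q1 r Q2 sig sig' trav nx,
    B (rv R0, v, t) -> (forall t', B (rv R0, v, t') -> t <= t') ->
    rv r = v -> rlev r = S (rlev R0) -> gt_opt (sig v) t ->
    sig_upd sig v t sig' ->
    step E (mkState (Q1 ++ r :: Q2) sig trav nx (Some (R0, B, v :: vs)))
           (mkState (Q1 ++ mkRec (rid r) v (rlev r) t (Some (rid R0)) :: Q2) sig'
                    ((rv R0, v, t) :: trav) nx (Some (R0, B, vs)))
| step_create_level : forall R0 (B : tedge V -> Prop) v vs t Q sig sig' trav nx,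
    B (rv R0, v, t) -> (forall t', B (rv R0, v, t') -> t <= t') ->
    (exists r, In r Q /\ rv r = v) ->
    (forall r, In r Q -> rv r = v -> rlev r <> S (rlev R0)) ->
    gt_opt (sig v) t ->
    sig_upd sig v t sig' ->
    step E (mkState Q sig trav nx (Some (R0, B, v :: vs)))
           (mkState (Q ++ [mkRec nx v (S (rlev R0)) t (Some (rid R0))]) sig'
                    ((rv R0, v, t) :: trav) (S nx) (Some (R0, B, vs)))
| step_skip : forall R0 (B : tedge V -> Prop) v vs t Q sig trav nx,
    B (rv R0, v, t) -> (forall t', B (rv R0, v, t') -> t <= t') ->
    ~ ((forall r, In r Q -> rv r <> v) /\ gt_opt (sig v) t) ->
    ~ ((exists r, In r Q /\ rv r = v /\ rlev r = S (rlev R0)) /\ gt_opt (sig v) t) ->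
    ~ ((exists r, In r Q /\ rv r = v) /\
       (forall r, In r Q -> rv r = v -> rlev r <> S (rlev R0)) /\
       gt_opt (sig v) t) ->
    step E (mkState Q sig trav nx (Some (R0, B, v :: vs)))
           (mkState Q sig ((rv R0, v, t) :: trav) nx (Some (R0, B, vs))).

Inductive reachable (E : list (tedge V)) (st0 : state) : state -> Prop :=
| reach_refl : reachable E st0 st0
| reach_step : forall st st', reachable E st0 st -> step E st st' ->
    reachable E st0 st'.

Definition at_most_two_of (Q : list rec) (v : V) : Prop :=
  forall (i j k : nat) (r1 r2 r3 : rec),
    (i < j)%nat -> (j < k)%nat ->
    nth_error Q i = Some r1 -> nth_error Q j = Some r2 -> nth_error Q k = Some r3 ->
    rv r1 = v -> rv r2 = v -> rv r3 = v -> False.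

End TemporalBFS.

(* The proof exhibits an invariant of every reachable state.  Writing a
   record's key as (vertex, level), the queue satisfies:
   - ordering: for any two records a before b in the queue, level a <=
     level b, and if they have the same vertex their levels differ;
   - window: there is a d such that every queued record has level d or d+1,
     and while a popped record R is being processed, d = level R. *)

From Stdlib Require Import Reals List Lia.
Import ListNotations.

Lemma ForallOrdPairs_app_single {A : Type} (P : A -> A -> Prop) (l : list A) (x : A) :
  ForallOrdPairs P l -> (forall y, In y l -> P y x) -> ForallOrdPairs P (l ++ [x]).
Proof.
  induction l as [|a l IH]; intros Hl Hx; simpl.
  - constructor; constructor.
  - inversion Hl as [|? ? Ha Hl']; subst. constructor.
    + apply Forall_app; split; auto. constructor; [apply Hx; simpl|]; auto.
    + apply IH; auto. intros y Hy; apply Hx; simpl; auto.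
Qed.

Lemma ForallOrdPairs_nth_error {A : Type} (P : A -> A -> Prop) (l : list A) :
  ForallOrdPairs P l ->
  forall i j a b, (i < j)%nat -> nth_error l i = Some a -> nth_error l j = Some b -> P a b.
Proof.
  induction 1 as [|x l Hx Hl IH]; intros i j a b Hij Hi Hj.
  - destruct i; discriminate.
  - destruct j as [|j]; [lia|]. simpl in Hj.
    destruct i as [|i]; simpl in Hi.
    + injection Hi as <-. rewrite Forall_forall in Hx. apply Hx.
      eapply nth_error_In; eauto.
    + apply (IH i j); auto; lia.
Qed.

Section QueueInvariant.
Context {V : Type}.

Definition key (r : @rec V) : V * nat := (rv r, rlev r).

Definition key_before (a b : V * nat) : Prop :=
  (snd a <= snd b)%nat /\ (fst a = fst b -> snd a <> snd b).

Definition queue_ordered (Q : list (@rec V)) : Prop :=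
  ForallOrdPairs key_before (map key Q).

Definition levels_within (d : nat) (Q : list (@rec V)) : Prop :=
  forall r, In r Q -> (d <= rlev r <= S d)%nat.

Definition queue_inv (d : nat) (st : @state V) : Prop :=
  queue_ordered (sQ st) /\ levels_within d (sQ st) /\
  (forall R0 B vs, scur st = Some (R0, B, vs) -> d = rlev R0).

Lemma ordered_window_at_most_two (d : nat) (Q : list (@rec V)) :
  queue_ordered Q -> levels_within d Q -> forall v, at_most_two_of Q v.
Proof.
  intros Hord Hwin v i j k r1 r2 r3 Hij Hjk H1 H2 H3 E1 E2 E3.
  assert (Hnth : forall a b i j, (i < j)%nat -> nth_error Q i = Some a ->
            nth_error Q j = Some b -> key_before (key a) (key b)).
  { intros a b i' j' Hlt Ha Hb. apply (ForallOrdPairs_nth_error _ _ Hord i' j'); auto;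
      rewrite nth_error_map; [rewrite Ha | rewrite Hb]; reflexivity. }
  destruct (Hnth r1 r2 i j) as [le12 ne12]; auto.
  destruct (Hnth r2 r3 j k) as [le23 ne23]; auto.
  unfold key in *; simpl in *.
  assert (rlev r1 <> rlev r2) by (apply ne12; congruence).
  assert (rlev r2 <> rlev r3) by (apply ne23; congruence).
  assert (d <= rlev r1 <= S d)%nat by (apply Hwin; eapply nth_error_In; eauto).
  assert (d <= rlev r3 <= S d)%nat by (apply Hwin; eapply nth_error_In; eauto).
  lia.
Qed.

(* Popping the front record R0 keeps the order, and the remaining records
   lie in the window based at level R0 (they are not below R0). *)
Lemma pop_preserves (d : nat) (R0 : @rec V) (Q : list (@rec V)) :
  queue_ordered (R0 :: Q) -> levels_within d (R0 :: Q) ->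
  queue_ordered Q /\ levels_within (rlev R0) Q.
Proof.
  intros Hord Hwin. inversion Hord as [|? ? Hfront Hrest]; subst.
  split; [exact Hrest|]. intros r Hr.
  rewrite Forall_forall in Hfront.
  destruct (Hfront (key r)) as [Hle _]; [apply in_map; auto|].
  assert (d <= rlev R0)%nat by (apply Hwin; simpl; auto).
  assert (rlev r <= S d)%nat by (apply Hwin; simpl; auto).
  simpl in Hle. lia.
Qed.

(* Appending a record of level d+1 whose vertex has no queued record at
   level d+1 keeps the invariant; this covers both creation rules. *)
Lemma append_preserves (d : nat) (Q : list (@rec V)) (r : @rec V) :
  queue_ordered Q -> levels_within d Q -> rlev r = S d ->
  (forall q, In q Q -> rv q = rv r -> rlev q <> S d) ->
  queue_ordered (Q ++ [r]) /\ levels_within d (Q ++ [r]).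
Proof.
  intros Hord Hwin Hlev Hfresh. split.
  - unfold queue_ordered. rewrite map_app. apply ForallOrdPairs_app_single; auto.
    intros y Hy. apply in_map_iff in Hy. destruct Hy as [q [<- Hq]].
    unfold key_before, key; simpl. rewrite Hlev. split.
    + specialize (Hwin q Hq); lia.
    + apply Hfresh; auto.
  - intros q Hq. apply in_app_or in Hq. destruct Hq as [Hq|[<-|[]]]; auto. lia.
Qed.

Lemma update_preserves (d : nat) (Q1 Q2 : list (@rec V)) (r r' : @rec V) :
  key r' = key r ->
  queue_ordered (Q1 ++ r :: Q2) -> levels_within d (Q1 ++ r :: Q2) ->
  queue_ordered (Q1 ++ r' :: Q2) /\ levels_within d (Q1 ++ r' :: Q2).
Proof.
  intros Hkey Hord Hwin. split.
  - unfold queue_ordered in *. rewrite map_app in *. simpl in *. rewrite Hkey. exact Hord.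
  - intros q Hq. apply in_app_or in Hq. destruct Hq as [Hq|[<-|Hq]].
    + apply Hwin, in_or_app; auto.
    + injection Hkey as _ ->. apply Hwin, in_or_app; simpl; auto.
    + apply Hwin, in_or_app; simpl; auto.
Qed.

Lemma step_preserves (E : list (tedge V)) (st st' : @state V) (d : nat) :
  queue_inv d st -> step E st st' -> exists d', queue_inv d' st'.
Proof.
  intros [Hord [Hwin Hcur]] Hstep.
  destruct Hstep as [R0|R0|R0 B v vs t Q sg sg' trav nx _ _ Hnone|
                    R0 B v vs t Q1 r Q2 sg sg' trav nx _ _ Hrv Hrlev|
                    R0 B v vs t Q sg sg' trav nx _ _ _ Hnolevel|R0];
    cbn [sQ scur] in *.
  - destruct (pop_preserves _ _ _ Hord Hwin) as [HQ HwQ].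
    exists (rlev R0). split; [|split]; cbn; auto.
    intros ? ? ? Hc; injection Hc; intros; subst; reflexivity.
  - exists d. split; [|split]; auto. discriminate.
  - rewrite (Hcur R0 B (v :: vs) eq_refl) in *.
    destruct (append_preserves (rlev R0) Q (mkRec nx v (S (rlev R0)) t (Some (rid R0))))
      as [HQ HwQ]; simpl; auto.
    { intros q Hq Hv. exfalso. exact (Hnone q Hq Hv). }
    exists (rlev R0). split; [|split]; cbn; auto.
    intros ? ? ? Hc; injection Hc; intros; subst; reflexivity.
  - rewrite (Hcur R0 B (v :: vs) eq_refl) in *.
    destruct (update_preserves (rlev R0) Q1 Q2 r (mkRec (rid r) v (rlev r) t (Some (rid R0))))
      as [HQ HwQ]; auto.
    { unfold key; simpl; rewrite Hrv, Hrlev; reflexivity. }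
    exists (rlev R0). split; [|split]; cbn; auto.
    intros ? ? ? Hc; injection Hc; intros; subst; reflexivity.
  - rewrite (Hcur R0 B (v :: vs) eq_refl) in *.
    destruct (append_preserves (rlev R0) Q (mkRec nx v (S (rlev R0)) t (Some (rid R0))))
      as [HQ HwQ]; simpl; auto.
    exists (rlev R0). split; [|split]; cbn; auto.
    intros ? ? ? Hc; injection Hc; intros; subst; reflexivity.
  - exists d. split; [|split]; auto.
    intros ? ? ? Hc; injection Hc; intros; subst. eapply Hcur; eauto.
Qed.

Lemma init_inv (s : V) (ts : R) (st0 : @state V) :
  init_state s ts st0 -> queue_inv 0 st0.
Proof.
  intros [HQ [_ [_ [_ [_ Hcur]]]]]. unfold queue_inv.
  rewrite HQ, Hcur. split; [|split].
  - repeat constructor.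
  - intros r [<-|[]]; simpl; lia.
  - discriminate.
Qed.

Lemma reachable_inv (E : list (tedge V)) (s : V) (ts : R) (st0 st : @state V) :
  init_state s ts st0 -> reachable E st0 st -> exists d, queue_inv d st.
Proof.
  intros Hinit Hreach. induction Hreach as [|st st' _ [d Hinv] Hstep].
  - exists 0%nat. eapply init_inv; eauto.
  - eapply step_preserves; eauto.
Qed.

End QueueInvariant.

Theorem lemma15 (V : Type) (E : list (tedge V)) (s : V) (ts : R)
  (HVfin : exists l : list V, forall x : V, In x l)
  (HEnodup : NoDup E)
  (HEloop : forall u v t, In (u, v, t) E -> u <> v)
  (st0 st : @state V) :
  init_state s ts st0 -> reachable E st0 st ->
  forall v : V, at_most_two_of (sQ st) v.
Proof.
  intros Hinit Hreach.
  destruct (reachable_inv E s ts st0 st Hinit Hreach) as [d [Hord [Hwin _]]].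
  exact (ordered_window_at_most_two d (sQ st) Hord Hwin).
Qed.
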